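(* Fix $\eta>0$ small, $\mathcal{I}=[\pi/4-\eta,\pi/4+\eta]$ and $\epsilon_0>0$ small. There exists $T>0$ such that $K^\parallel_{r,\epsilon}(\rho_\mu(t))<0$ and $K_\mu(t)<0$ for all $(t,s,r,\epsilon)\in[T,\infty)\times[0,\infty)\times\mathcal{I}\times[0,\epsilon_0]$, where $\mu=(s,r,\epsilon)$.
   Context: Fix $\varphi\in C^\infty(\mathbb{R})$ with $0\le\varphi\le1$, $\varphi(x)=0$ for $x\le0$, $\varphi(x)=1$ for $x\ge1$, and let $H$ be the Heaviside function ($H(x)=1$ for $x>0$, $H(x)=0$ for $x\le0$). For $r>0$, $\epsilon\ge0$ with $r+\epsilon<\pi/2$ and $\rho\ge0$ set $K^\parallel_{r,\epsilon}(\rho)=1-2\varphi((\rho-r)/\epsilon)$ if $\epsilon>0$ and $K^\parallel_{r,0}(\rho)=1-2H(\rho-r)$. Let $\mathcal{A}_{r,\epsilon}$ solve $\mathcal{A}''+K^\parallel_{r,\epsilon}\mathcal{A}=0$, $\mathcal{A}(0)=0$, $\mathcal{A}'(0)=1$ (for $\epsilon=0$: the unique $C^1$ function with these initial values solving the equation on $\rho\ne r$). For $\mu=(s,r,\epsilon)$, $\rho_\mu(t)$ is, for $s>0$, the solution of $\rho''=\frac{\mathcal{A}_{r,\epsilon}'(\rho)}{\mathcal{A}_{r,\epsilon}(\rho)}(1-(\rho')^2)$, $\rho(0)=s$, $\rho'(0)=0$, and $\rho_{0,r,\epsilon}(t)=t$. $K^\perp_{r,\epsilon}=\mathcal{A}_{r,\epsilon}^{-2}(1-(\mathcal{A}_{r,\epsilon}')^2)$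 and $K_\mu(t)=\rho_\mu'(t)^2K^\parallel_{r,\epsilon}(\rho_\mu(t))+(1-\rho_\mu'(t)^2)K^\perp_{r,\epsilon}(\rho_\mu(t))$. *)

From Stdlib Require Import Reals Lra.
Open Scope R_scope.

Definition smooth (phi : R -> R) : Prop :=
  exists D : nat -> R -> R,
    (forall x, D 0%nat x = phi x) /\
    (forall n x, derivable_pt_lim (D n) x (D (S n) x)).

Definition cutoff (phi : R -> R) : Prop :=
  smooth phi /\
  (forall x, 0 <= phi x <= 1) /\
  (forall x, x <= 0 -> phi x = 0) /\
  (forall x, 1 <= x -> phi x = 1).

Definition heaviside (x : R) : R := if Rlt_dec 0 x then 1 else 0.

Definition Kpar (phi : R -> R) (r eps rho : R) : R :=
  if Rlt_dec 0 eps then 1 - 2 * phi ((rho - r) / eps)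
  else 1 - 2 * heaviside (rho - r).

Definition is_A (phi : R -> R) (r eps : R) (A dA : R -> R) : Prop :=
  A 0 = 0 /\ dA 0 = 1 /\
  (forall x, derivable_pt_lim A x (dA x)) /\
  continuity dA /\
  (forall x, 0 <= x -> (0 < eps \/ x <> r) ->
     derivable_pt_lim dA x (- (Kpar phi r eps x * A x))).

(* rho_mu (with derivative drho), mu = (s, r, eps), given A_{r,eps} = A, A' = dA. *)
Definition is_rho (s : R) (A dA : R -> R) (rho drho : R -> R) : Prop :=
  (forall t, derivable_pt_lim rho t (drho t)) /\
  (s = 0 -> forall t, rho t = t) /\
  (0 < s ->
     rho 0 = s /\ drho 0 = 0 /\
     forall t, 0 <= t ->
       derivable_pt_lim drho t (dA (rho t) / A (rho t) * (1 - drho t ^ 2))).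

Definition Kperp (A dA : R -> R) (x : R) : R := (1 - dA x ^ 2) / (A x ^ 2).

Definition Kmu (phi : R -> R) (r eps : R) (A dA rho drho : R -> R) (t : R) : R :=
  drho t ^ 2 * Kpar phi r eps (rho t) + (1 - drho t ^ 2) * Kperp A dA (rho t).

(* For rho <= r the profile is A = sin, so at rho = r (close to pi/4) both A and
   A' lie above 1/2.  An energy estimate keeps them in [2/5, 2] across the short
   transition [r, r + eps]; beyond it K^par = -1, so A and A' grow like e^rho and
   A' > 1 from rho = 4 on, which makes K^perp negative there.  Along rho_mu the
   Clairaut relation (1 - rho'^2) A(rho)^2 = A(s)^2 keeps rho > 0 and |rho'| < 1,
   and the bound A <= 10 rho A' gives (rho^2)'' >= 1/5, hence rho(t)^2 >= t^2/10
   >= 16 for t >= 13.  There K^par = -1 and K_mu is a convex combination of -1 and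
   K^perp < 0 (for s = 0, rho(t) = t and K_mu = K^par). *)

From Stdlib Require Import Reals Lra FunctionalExtensionality.
Open Scope R_scope.

(* Only continuity is asked at the endpoints: when [eps = 0] the profile [dA]
   has a kink at [r], which may be an endpoint. *)
Definition deriv_on (f f' : R -> R) (a b : R) : Prop :=
  (forall x, a <= x <= b -> continuity_pt f x) /\
  (forall x, a < x < b -> derivable_pt_lim f x (f' x)).

Lemma deriv_on_of_derivable f f' a b :
  (forall x, a <= x <= b -> derivable_pt_lim f x (f' x)) -> deriv_on f f' a b.
Proof.
  intros H; split; intros x Hx.
  - apply derivable_continuous_pt; exists (f' x); apply H; exact Hx.
  - apply H; lra.
Qed.

Lemma deriv_on_restrict f f' a b c d :
  a <= c -> d <= b -> deriv_on f f' a b -> deriv_on f f' c d.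
Proof. intros Hac Hdb [Hc Hd]; split; intros x Hx; [apply Hc | apply Hd]; lra. Qed.

Lemma deriv_on_ext f f' g' a b :
  (forall x, a < x < b -> f' x = g' x) -> deriv_on f f' a b -> deriv_on f g' a b.
Proof. intros E [Hc Hd]; split; [exact Hc |]; intros x Hx; rewrite <- E by exact Hx; auto. Qed.

Lemma deriv_on_const c a b : deriv_on (fun _ => c) (fun _ => 0) a b.
Proof. apply deriv_on_of_derivable; intros x _; apply derivable_pt_lim_const. Qed.

Lemma deriv_on_id a b : deriv_on (fun x => x) (fun _ => 1) a b.
Proof. apply deriv_on_of_derivable; intros x _; apply derivable_pt_lim_id. Qed.

Lemma deriv_on_plus f f' g g' a b : deriv_on f f' a b -> deriv_on g g' a b ->
  deriv_on (fun x => f x + g x) (fun x => f' x + g' x) a b.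
Proof.
  intros [Hfc Hfd] [Hgc Hgd]; split; intros x Hx.
  - exact (continuity_pt_plus f g x (Hfc x Hx) (Hgc x Hx)).
  - exact (derivable_pt_lim_plus f g x _ _ (Hfd x Hx) (Hgd x Hx)).
Qed.

Lemma deriv_on_opp f f' a b :
  deriv_on f f' a b -> deriv_on (fun x => - f x) (fun x => - f' x) a b.
Proof.
  intros [Hfc Hfd]; split; intros x Hx.
  - exact (continuity_pt_opp f x (Hfc x Hx)).
  - exact (derivable_pt_lim_opp f x _ (Hfd x Hx)).
Qed.

Lemma deriv_on_minus f f' g g' a b : deriv_on f f' a b -> deriv_on g g' a b ->
  deriv_on (fun x => f x - g x) (fun x => f' x - g' x) a b.
Proof.
  intros [Hfc Hfd] [Hgc Hgd]; split; intros x Hx.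
  - exact (continuity_pt_minus f g x (Hfc x Hx) (Hgc x Hx)).
  - exact (derivable_pt_lim_minus f g x _ _ (Hfd x Hx) (Hgd x Hx)).
Qed.

Lemma deriv_on_mult f f' g g' a b : deriv_on f f' a b -> deriv_on g g' a b ->
  deriv_on (fun x => f x * g x) (fun x => f' x * g x + f x * g' x) a b.
Proof.
  intros [Hfc Hfd] [Hgc Hgd]; split; intros x Hx.
  - exact (continuity_pt_mult f g x (Hfc x Hx) (Hgc x Hx)).
  - exact (derivable_pt_lim_mult f g x _ _ (Hfd x Hx) (Hgd x Hx)).
Qed.

Lemma deriv_on_comp f f' g g' a b :
  (forall y, derivable_pt_lim g y (g' y)) -> deriv_on f f' a b ->
  deriv_on (fun x => g (f x)) (fun x => g' (f x) * f' x) a b.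
Proof.
  intros Hg [Hfc Hfd]; split; intros x Hx.
  - apply (continuity_pt_comp f g x (Hfc x Hx)).
    apply derivable_continuous_pt; exists (g' (f x)); apply Hg.
  - exact (derivable_pt_lim_comp f g x _ _ (Hfd x Hx) (Hg (f x))).
Qed.

Lemma deriv_on_sq f f' a b : deriv_on f f' a b ->
  deriv_on (fun x => f x ^ 2) (fun x => 2 * f x * f' x) a b.
Proof.
  intros Hf; apply (deriv_on_ext _ (fun x => (fun y => 2 * y) (f x) * f' x)).
  - intros x _; cbv beta; ring.
  - apply (deriv_on_comp f f' (fun y => y ^ 2)); [| exact Hf].
    intro y; replace (2 * y) with (INR 2 * y ^ Nat.pred 2) by (simpl; ring).
    apply derivable_pt_lim_pow.
Qed.

Lemma deriv_on_exp f f' a b : deriv_on f f' a b ->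
  deriv_on (fun x => exp (f x)) (fun x => exp (f x) * f' x) a b.
Proof. apply deriv_on_comp; exact derivable_pt_lim_exp. Qed.

Lemma deriv_on_scal c f f' a b : deriv_on f f' a b ->
  deriv_on (fun x => c * f x) (fun x => c * f' x) a b.
Proof.
  intros Hf; apply (deriv_on_ext _ (fun x => 0 * f x + c * f' x)).
  - intros x _; ring.
  - exact (deriv_on_mult _ _ _ _ a b (deriv_on_const c a b) Hf).
Qed.

Lemma deriv_on_linear c a b : deriv_on (fun x => c * x) (fun _ => c) a b.
Proof.
  apply (deriv_on_ext _ (fun _ => c * 1)); [intros; ring |].
  apply deriv_on_scal, deriv_on_id.
Qed.

Lemma deriv_on_nonneg_le f f' a b : a <= b -> deriv_on f f' a b ->
  (forall x, a < x < b -> 0 <= f' x) -> f a <= f b.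
Proof.
  intros Hab [Hc Hd] Hpos.
  destruct (Req_dec a b) as [-> | Hne]; [lra |].
  assert (pr1 : forall c, a < c < b -> derivable_pt f c)
    by (intros c Hc'; exists (f' c); apply Hd; exact Hc').
  assert (pr2 : forall c, a < c < b -> derivable_pt id c)
    by (intros c _; apply derivable_pt_id).
  destruct (MVT f id a b pr1 pr2 ltac:(lra) Hc
    (fun c _ => derivable_continuous_pt _ _ (derivable_pt_id c))) as [c [P HP]].
  rewrite (derive_pt_eq_0 _ _ _ (pr1 c P) (Hd c P)) in HP.
  rewrite (derive_pt_eq_0 _ _ _ (pr2 c P) (derivable_pt_lim_id c)) in HP.
  unfold id in HP. specialize (Hpos c P). nra.
Qed.

Lemma deriv_on_compare f f' g g' a b : a <= b ->
  deriv_on f f' a b -> deriv_on g g' a b ->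
  (forall x, a < x < b -> f' x <= g' x) -> f b - f a <= g b - g a.
Proof.
  intros Hab Hf Hg Hle.
  enough (g a - f a <= g b - f b) by lra.
  apply (deriv_on_nonneg_le (fun x => g x - f x) (fun x => g' x - f' x) a b Hab).
  - exact (deriv_on_minus _ _ _ _ a b Hg Hf).
  - intros x Hx; specialize (Hle x Hx); lra.
Qed.

Lemma deriv_on_zero_eq f f' a b : a <= b -> deriv_on f f' a b ->
  (forall x, a < x < b -> f' x = 0) -> f a = f b.
Proof.
  intros Hab Hf H0.
  pose proof (deriv_on_compare _ _ _ _ a b Hab Hf (deriv_on_const 0 a b)) as H1.
  pose proof (deriv_on_compare _ _ _ _ a b Hab (deriv_on_const 0 a b) Hf) as H2.
  cbv beta in H1, H2.
  enough (f b - f a <= 0 - 0 /\ 0 - 0 <= f b - f a) by lra.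
  split; [apply H1 | apply H2]; intros x Hx; rewrite H0 by exact Hx; lra.
Qed.

Lemma deriv_on_gronwall f f' c a b : a <= b -> deriv_on f f' a b ->
  (forall x, a < x < b -> f' x <= c * f x) -> f b <= f a * exp (c * (b - a)).
Proof.
  intros Hab Hf Hle.
  (* [f x * exp (- c x)] is nonincreasing *)
  assert (Hdec : f b * exp (- c * b) <= f a * exp (- c * a)).
  { enough (f b * exp (- c * b) - f a * exp (- c * a) <= 0 - 0) by lra.
    apply (deriv_on_compare (fun x => f x * exp (- c * x))
      (fun x => f' x * exp (- c * x) + f x * (exp (- c * x) * (- c * 1)))
      (fun _ => 0) (fun _ => 0) a b Hab).
    - apply (deriv_on_mult _ _ _ _ a b Hf), deriv_on_exp, deriv_on_scal, deriv_on_id.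
    - apply deriv_on_const.
    - intros x Hx. specialize (Hle x Hx).
      assert (0 < exp (- c * x)) by apply exp_pos. nra. }
  assert (Eb : exp (- c * b) * exp (c * b) = 1)
    by (rewrite <- exp_plus, <- exp_0; f_equal; ring).
  assert (Ea : exp (- c * a) * exp (c * b) = exp (c * (b - a)))
    by (rewrite <- exp_plus; f_equal; ring).
  pose proof (Rmult_le_compat_r (exp (c * b)) _ _ (Rlt_le _ _ (exp_pos _)) Hdec) as H.
  rewrite !Rmult_assoc, Eb, Ea, Rmult_1_r in H. exact H.
Qed.

Lemma deriv_on_exp_eq f c a b : a <= b -> deriv_on f (fun x => c * f x) a b ->
  f b = f a * exp (c * (b - a)).
Proof.
  intros Hab Hf.
  pose proof (deriv_on_gronwall f _ c a b Hab Hf (fun x _ => Rle_refl _)).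
  pose proof (deriv_on_gronwall (fun x => - f x) _ c a b Hab (deriv_on_opp _ _ a b Hf)
                (fun x _ => ltac:(lra))).
  lra.
Qed.

Lemma exp_le_compat x y : x <= y -> exp x <= exp y.
Proof. intros [Hlt | ->]; [left; apply exp_increasing; exact Hlt | right; reflexivity]. Qed.

Lemma harmonic_eq_sin_cos u v b : 0 <= b ->
  deriv_on u v 0 b -> deriv_on v (fun x => - u x) 0 b -> u 0 = 0 -> v 0 = 1 ->
  u b = sin b /\ v b = cos b.
Proof.
  intros Hb Hu Hv Hu0 Hv0.
  assert (HE : (u 0 - sin 0) ^ 2 + (v 0 - cos 0) ^ 2 = (u b - sin b) ^ 2 + (v b - cos b) ^ 2).
  { apply (deriv_on_zero_eq (fun x => (u x - sin x) ^ 2 + (v x - cos x) ^ 2)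
      (fun x => 2 * (u x - sin x) * (v x - cos x) + 2 * (v x - cos x) * (- u x - - sin x))
      0 b Hb); [| intros; ring].
    apply deriv_on_plus; apply deriv_on_sq; apply deriv_on_minus; auto;
      apply deriv_on_of_derivable; intros x _.
    - apply derivable_pt_lim_sin.
    - apply derivable_pt_lim_cos. }
  rewrite Hu0, Hv0, sin_0, cos_0 in HE.
  pose proof (pow2_ge_0 (u b - sin b)). pose proof (pow2_ge_0 (v b - cos b)).
  split; nra.
Qed.

Lemma perturbed_harmonic_bounds u v k a b : a <= b <= a + 1/20 ->
  deriv_on u v a b -> deriv_on v (fun x => - (k x * u x)) a b ->
  (forall x, a < x < b -> -1 <= k x <= 1) ->
  1/2 <= u a -> 1/2 <= v a -> u a ^ 2 + v a ^ 2 = 1 ->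
  2/5 <= u b <= 2 /\ 2/5 <= v b <= 2.
Proof.
  intros Hab Hu Hv Hk Hua Hva E1.
  assert (Hbound : forall x, a <= x <= b -> -2 <= u x <= 2 /\ -2 <= v x <= 2).
  { intros x Hx.
    assert (HE : u x ^ 2 + v x ^ 2 <= (u a ^ 2 + v a ^ 2) * exp (2 * (x - a))).
    { apply (deriv_on_gronwall (fun y => u y ^ 2 + v y ^ 2)
        (fun y => 2 * u y * v y + 2 * v y * - (k y * u y)) 2 a x); [lra | |].
      - apply deriv_on_plus; apply deriv_on_sq;
          [apply (deriv_on_restrict _ _ a b) | apply (deriv_on_restrict _ _ a b)]; auto; lra.
      - intros y Hy. destruct (Hk y ltac:(lra)).
        pose proof (pow2_ge_0 (u y - v y)). pose proof (pow2_ge_0 (u y + v y)). nra. }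
    assert (exp (2 * (x - a)) < 3).
    { apply Rlt_le_trans with (exp 1); [apply exp_increasing; lra | exact exp_le_3]. }
    rewrite E1 in HE. pose proof (pow2_ge_0 (u x)). pose proof (pow2_ge_0 (v x)).
    split; split; nra. }
  assert (Hu_lb : -2 * b - -2 * a <= u b - u a).
  { apply (deriv_on_compare _ _ _ _ a b ltac:(lra) (deriv_on_linear (-2) a b) Hu).
    intros x Hx. destruct (Hbound x ltac:(lra)). lra. }
  assert (Hv_lb : -2 * b - -2 * a <= v b - v a).
  { apply (deriv_on_compare _ _ _ _ a b ltac:(lra) (deriv_on_linear (-2) a b) Hv).
    intros x Hx. destruct (Hbound x ltac:(lra)). destruct (Hk x Hx). nra. }
  destruct (Hbound b ltac:(lra)). lra.
Qed.

Lemma hyperbolic_bounds u v p x : p <= x ->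
  deriv_on u v p x -> deriv_on v u p x ->
  2/5 <= u p <= 2 -> 2/5 <= v p <= 2 ->
  2/5 <= u x /\ 2/5 <= v x /\ u x <= 5 * v x /\ (p + 2 <= x -> 6/5 <= v x).
Proof.
  intros Hpx Hu Hv Hup Hvp.
  assert (Hsum : u x + v x = (u p + v p) * exp (1 * (x - p))).
  { apply (deriv_on_exp_eq (fun y => u y + v y) 1 p x Hpx).
    apply (deriv_on_ext _ (fun y => v y + u y)); [intros; ring |].
    exact (deriv_on_plus _ _ _ _ p x Hu Hv). }
  assert (Hdiff : v x - u x = (v p - u p) * exp (-1 * (x - p))).
  { apply (deriv_on_exp_eq (fun y => v y - u y) (-1) p x Hpx).
    apply (deriv_on_ext _ (fun y => u y - v y)); [intros; ring |].
    exact (deriv_on_minus _ _ _ _ p x Hv Hu). }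
  set (m := exp (1 * (x - p))) in Hsum. set (n := exp (-1 * (x - p))) in Hdiff.
  assert (Hmn : m * n = 1).
  { unfold m, n; rewrite <- exp_plus.
    replace (1 * (x - p) + -1 * (x - p)) with 0 by ring; apply exp_0. }
  assert (Hm : 1 <= m).
  { unfold m; rewrite <- exp_0 at 1; apply exp_le_compat; lra. }
  assert (Hn : 0 < n) by apply exp_pos.
  assert (Hn1 : n <= 1) by nra.
  assert (Hux : 2 * u x = (u p + v p) * m - (v p - u p) * n) by lra.
  assert (Hvx : 2 * v x = (u p + v p) * m + (v p - u p) * n) by lra.
  assert (Hm4 : p + 2 <= x -> 4 < m).
  { intro Hx2.
    assert (He1 : 2 < exp 1) by (pose proof (exp_ineq1 1 ltac:(lra)); lra).
    assert (He2 : exp 2 <= m)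
      by (apply exp_le_compat; lra).
    replace 2 with (1 + 1) in He2 by ring. rewrite exp_plus in He2. nra. }
  clear Hsum Hdiff.
  destruct (Rle_dec (u p) (v p));
    (split; [nra | split; [nra | split; [nra | intro Hx2; specialize (Hm4 Hx2); nra]]]).
Qed.

Section Profile.

Variables (phi : R -> R) (r eps : R) (A dA : R -> R).
Hypotheses (Hphi : cutoff phi) (Heps : 0 <= eps) (HA : is_A phi r eps A dA).

Lemma Kpar_left x : x <= r -> Kpar phi r eps x = 1.
Proof.
  intros Hx. destruct Hphi as [_ [_ [Hphi0 _]]]. unfold Kpar, heaviside.
  destruct (Rlt_dec 0 eps) as [He | He].
  - rewrite Hphi0; [lra |]. unfold Rdiv.
    assert (0 < / eps) by (apply Rinv_0_lt_compat; lra). nra.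
  - destruct (Rlt_dec 0 (x - r)); lra.
Qed.

Lemma Kpar_right x : r + eps < x -> Kpar phi r eps x = -1.
Proof.
  intros Hx. destruct Hphi as [_ [_ [_ Hphi1]]]. unfold Kpar, heaviside.
  destruct (Rlt_dec 0 eps) as [He | He].
  - rewrite Hphi1; [lra |]. apply (Rmult_le_reg_r eps); [lra |].
    unfold Rdiv; rewrite Rmult_assoc, Rinv_l; lra.
  - destruct (Rlt_dec 0 (x - r)); lra.
Qed.

Lemma Kpar_bounds x : -1 <= Kpar phi r eps x <= 1.
Proof.
  destruct Hphi as [_ [Hphi01 _]]. unfold Kpar, heaviside.
  destruct (Rlt_dec 0 eps).
  - specialize (Hphi01 ((x - r) / eps)). lra.
  - destruct (Rlt_dec 0 (x - r)); lra.
Qed.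

Lemma A_deriv_on a b : deriv_on A dA a b.
Proof. apply deriv_on_of_derivable; intros x _; apply HA. Qed.

Lemma dA_deriv_on a b : 0 <= a -> (b <= r \/ r <= a \/ 0 < eps) ->
  deriv_on dA (fun x => - (Kpar phi r eps x * A x)) a b.
Proof.
  destruct HA as [_ [_ [_ [HdAc HdAd]]]]. intros Ha Hr; split; intros x Hx.
  - apply HdAc.
  - apply HdAd; lra.
Qed.

Lemma A_eq_sin x : 0 <= x <= r -> A x = sin x /\ dA x = cos x.
Proof.
  intros Hx. destruct HA as [HA0 [HdA0 _]].
  apply harmonic_eq_sin_cos; [lra | apply A_deriv_on | | exact HA0 | exact HdA0].
  apply (deriv_on_ext _ (fun y => - (Kpar phi r eps y * A y))).
  - intros y Hy; rewrite Kpar_left by lra; ring.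
  - apply dA_deriv_on; lra.
Qed.

Hypotheses (Hr : PI / 6 <= r <= PI / 3) (Heps_small : eps <= 1/20).

Lemma A_dA_transition x : r <= x <= r + eps -> 2/5 <= A x <= 2 /\ 2/5 <= dA x <= 2.
Proof.
  intros Hx. pose proof PI_RGT_0.
  destruct (A_eq_sin r ltac:(lra)) as [Ar dAr].
  assert (Hs : 1/2 <= sin r) by (rewrite <- sin_PI6; apply sin_incr_1; lra).
  assert (Hc : 1/2 <= cos r) by (rewrite <- cos_PI3; apply cos_decr_1; lra).
  apply (perturbed_harmonic_bounds A dA (Kpar phi r eps) r x).
  - lra.
  - apply A_deriv_on.
  - apply dA_deriv_on; lra.
  - intros; apply Kpar_bounds.
  - lra.
  - lra.
  - rewrite Ar, dAr, <- (sin2_cos2 r); unfold Rsqr; ring.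
Qed.

Lemma A_dA_beyond x : r + eps <= x ->
  2/5 <= A x /\ 2/5 <= dA x /\ A x <= 5 * dA x /\ (r + eps + 2 <= x -> 6/5 <= dA x).
Proof.
  intros Hx. pose proof PI_RGT_0.
  destruct (A_dA_transition (r + eps) ltac:(lra)).
  apply hyperbolic_bounds; [lra | apply A_deriv_on | | lra | lra].
  apply (deriv_on_ext _ (fun y => - (Kpar phi r eps y * A y))).
  - intros y Hy; rewrite Kpar_right by lra; ring.
  - apply dA_deriv_on; lra.
Qed.

Lemma A_pos_le x : 0 < x -> 0 < A x /\ A x <= 10 * x * dA x.
Proof.
  intros Hx. pose proof PI_RGT_0. pose proof PI_4. pose proof PI2_3_2.
  destruct (Rle_dec x r) as [Hxr | Hxr]; [| destruct (Rle_dec x (r + eps)) as [Hxp | Hxp]].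
  - destruct (A_eq_sin x ltac:(lra)) as [-> ->].
    assert (0 < sin x) by (apply sin_gt_0; lra).
    assert (sin x < x) by (apply sin_lt_x; lra).
    assert (1/2 <= cos x) by (rewrite <- cos_PI3; apply cos_decr_1; lra).
    split; nra.
  - destruct (A_dA_transition x ltac:(lra)). assert (1/2 <= x) by lra. split; nra.
  - destruct (A_dA_beyond x ltac:(lra)) as [? [? [? _]]]. assert (1/2 <= x) by lra. split; nra.
Qed.

Lemma Kperp_neg x : 4 <= x -> Kperp A dA x < 0.
Proof.
  intros Hx. pose proof PI_4.
  destruct (A_dA_beyond x ltac:(lra)) as [HAx [_ [_ HdAx]]].
  specialize (HdAx ltac:(lra)).
  assert (1 - dA x ^ 2 < 0) by nra.
  assert (0 < / A x ^ 2) by (apply Rinv_0_lt_compat; nra).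
  unfold Kperp, Rdiv. nra.
Qed.

End Profile.

Section Geodesic.

Variables (c s : R) (A dA rho drho : R -> R).
Hypotheses (Hc : 1 <= c) (Hs : 0 < s) (HA0 : A 0 = 0)
  (HAd : forall x, derivable_pt_lim A x (dA x))
  (HA_le : forall x, 0 < x -> 0 < A x /\ A x <= c * x * dA x)
  (Hrho : is_rho s A dA rho drho).

Let ddrho t := dA (rho t) / A (rho t) * (1 - drho t ^ 2).

Lemma rho_deriv_on a b : deriv_on rho drho a b.
Proof. apply deriv_on_of_derivable; intros x _; apply Hrho. Qed.

Lemma drho_deriv_on b : deriv_on drho ddrho 0 b.
Proof.
  destruct Hrho as [_ [_ H]]. destruct (H Hs) as [_ [_ Hdd]].
  apply deriv_on_of_derivable; intros x Hx; apply Hdd; lra.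
Qed.

Lemma rho_clairaut t : 0 <= t -> (1 - drho t ^ 2) * A (rho t) ^ 2 = A s ^ 2.
Proof.
  intros Ht. destruct Hrho as [_ [_ H]]. destruct (H Hs) as [Hrho0 [Hdrho0 _]].
  transitivity ((1 - drho 0 ^ 2) * A (rho 0) ^ 2); [| rewrite Hrho0, Hdrho0; ring].
  symmetry.
  apply (deriv_on_zero_eq (fun y => (1 - drho y ^ 2) * A (rho y) ^ 2)
    (fun y => (0 - 2 * drho y * ddrho y) * A (rho y) ^ 2
              + (1 - drho y ^ 2) * (2 * A (rho y) * (dA (rho y) * drho y))) 0 t Ht).
  - apply deriv_on_mult.
    + apply deriv_on_minus; [apply deriv_on_const | apply deriv_on_sq, drho_deriv_on].
    + apply deriv_on_sq, deriv_on_comp; [exact HAd | apply rho_deriv_on].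
  - (* where [A] vanishes the junk value [dA / 0 = 0] makes the derivative 0 too *)
    intros y _. unfold ddrho. destruct (Req_dec (A (rho y)) 0) as [h | h].
    + rewrite h; ring.
    + field; exact h.
Qed.

Lemma rho_pos t : 0 <= t -> 0 < rho t.
Proof.
  intros Ht.
  assert (HAs : 0 < A s) by (apply HA_le; exact Hs).
  assert (Hzero : forall z, 0 <= z -> rho z <> 0).
  { intros z Hz Hrz. pose proof (rho_clairaut z Hz) as E.
    rewrite Hrz, HA0 in E. nra. }
  destruct (Rtotal_order 0 (rho t)) as [Hp | [Hz | Hn]].
  - exact Hp.
  - exfalso; exact (Hzero t Ht (eq_sym Hz)).
  - exfalso. destruct Hrho as [Hrd [_ H]]. destruct (H Hs) as [Hrho0 _].
    assert (Hcont : continuity (fun y => - rho y)).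
    { intro y. apply (continuity_pt_opp rho), derivable_continuous_pt.
      exists (drho y); apply Hrd. }
    destruct (Req_dec t 0) as [-> | Ht0]; [lra |].
    destruct (IVT (fun y => - rho y) 0 t Hcont ltac:(lra) ltac:(lra) ltac:(lra))
      as [z [Hz1 Hz2]].
    apply (Hzero z ltac:(lra)); lra.
Qed.

Lemma drho_sq_lt_1 t : 0 <= t -> drho t ^ 2 < 1.
Proof.
  intros Ht. pose proof (rho_clairaut t Ht) as E.
  destruct (HA_le s Hs). destruct (HA_le (rho t) (rho_pos t Ht)).
  assert (0 < A (rho t) ^ 2) by nra. nra.
Qed.

Lemma rho_drho_deriv_ge t : 0 <= t -> 1 / c <= drho t * drho t + rho t * ddrho t.
Proof.
  intros Ht. pose proof (drho_sq_lt_1 t Ht) as Hv.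
  destruct (HA_le (rho t) (rho_pos t Ht)) as [HAt HAt'].
  set (q := dA (rho t) / A (rho t)).
  assert (Hq : A (rho t) * q = dA (rho t)) by (unfold q; field; lra).
  assert (Hrq : 1 / c <= rho t * q).
  { apply (Rmult_le_reg_l c); [lra |]. field_simplify; [| lra]. nra. }
  assert (Hc1 : 1 / c <= 1) by (apply (Rmult_le_reg_l c); [lra |]; field_simplify; lra).
  unfold ddrho; fold q.
  pose proof (pow2_ge_0 (drho t)). nra.
Qed.

Lemma rho_drho_ge t : 0 <= t -> 1 / c * t <= rho t * drho t.
Proof.
  intros Ht. destruct Hrho as [_ [_ H]]. destruct (H Hs) as [_ [Hdrho0 _]].
  pose proof (deriv_on_compare _ _ _ _ 0 t Ht (deriv_on_linear (1 / c) 0 t)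
    (deriv_on_mult _ _ _ _ 0 t (rho_deriv_on 0 t) (drho_deriv_on t))) as Hcmp.
  cbv beta in Hcmp. rewrite Hdrho0 in Hcmp.
  enough (1 / c * t - 1 / c * 0 <= rho t * drho t - rho 0 * 0) by lra.
  apply Hcmp; intros y Hy; apply rho_drho_deriv_ge; lra.
Qed.

Lemma rho_sq_ge t : 0 <= t -> t ^ 2 <= c * rho t ^ 2.
Proof.
  intros Ht.
  pose proof (deriv_on_compare _ _ _ _ 0 t Ht
    (deriv_on_scal (1 / c) _ _ 0 t (deriv_on_sq _ _ 0 t (deriv_on_id 0 t)))
    (deriv_on_sq _ _ 0 t (rho_deriv_on 0 t))) as Hcmp.
  cbv beta in Hcmp.
  assert (Hsq : 1 / c * t ^ 2 - 1 / c * 0 ^ 2 <= rho t ^ 2 - rho 0 ^ 2).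
  { apply Hcmp; intros y Hy. pose proof (rho_drho_ge y ltac:(lra)). lra. }
  pose proof (pow2_ge_0 (rho 0)).
  replace (t ^ 2) with (c * (1 / c * t ^ 2)) by (field; lra).
  apply Rmult_le_compat_l; lra.
Qed.

End Geodesic.

Theorem lemma3p15 (phi : R -> R) (Hphi : cutoff phi) :
  exists eta0, 0 < eta0 /\
  forall eta, 0 < eta < eta0 ->
  exists eps1, 0 < eps1 /\
  forall eps0, 0 < eps0 < eps1 ->
  exists T, 0 < T /\
  forall (t s r eps : R),
    T <= t -> 0 <= s ->
    PI / 4 - eta <= r <= PI / 4 + eta ->
    0 <= eps <= eps0 ->
    forall (A dA rho drho : R -> R),
      is_A phi r eps A dA ->
      is_rho s A dA rho drho ->
      Kpar phi r eps (rho t) < 0 /\ Kmu phi r eps A dA rho drho t < 0.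
Proof.
  exists (1/20); split; [lra |]; intros eta Heta.
  exists (1/20); split; [lra |]; intros eps0 Heps0.
  exists 13; split; [lra |].
  intros t s r eps Ht Hs Hr Heps A dA rho drho HA Hrho.
  pose proof PI_4; pose proof PI2_3_2.
  assert (Hfar : forall x, 4 <= x -> Kpar phi r eps x = -1 /\ Kperp A dA x < 0).
  { intros x Hx; split.
    - apply Kpar_right; auto; lra.
    - apply (Kperp_neg phi r eps); auto; lra. }
  unfold Kmu.
  destruct (Rle_lt_or_eq_dec 0 s Hs) as [Hs_pos | <-].
  - pose proof HA as [HA0 [_ [HAd _]]].
    pose proof (A_pos_le phi r eps A dA Hphi ltac:(lra) HA ltac:(lra) ltac:(lra)) as HA_le.
    pose proof (rho_sq_ge 10 s A dA rho drho ltac:(lra) Hs_pos HA0 HAd HA_le Hrho t ltac:(lra)).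
    pose proof (rho_pos 10 s A dA rho drho Hs_pos HA0 HAd HA_le Hrho t ltac:(lra)).
    pose proof (drho_sq_lt_1 10 s A dA rho drho Hs_pos HA0 HAd HA_le Hrho t ltac:(lra)).
    destruct (Hfar (rho t) ltac:(nra)) as [-> HKperp].
    pose proof (pow2_ge_0 (drho t)). split; nra.
  - destruct Hrho as [Hrd [Hid _]].
    assert (Erho : rho = fun y => y) by (apply functional_extensionality; exact (Hid eq_refl)).
    assert (Edrho : drho t = 1).
    { apply (uniqueness_limite rho t); [apply Hrd | rewrite Erho; apply derivable_pt_lim_id]. }
    rewrite Edrho, Erho. destruct (Hfar t ltac:(lra)) as [-> _]. lra.
Qed.
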